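(* Let $\mu>0$ and let $\mathcal{D}_\mu$ be the collection of all mixed Poisson random variables $D$ with $\mathbb{E}(D)=\mu$. Let $\mu_c$ be the largest real root of $2x=e^{x-1/2}$ ($\mu_c\approx 1.756$). Let $X^*$ be the random variable with $$\mathbb{P}(X^*=\max(\mu,\mu_c))=1-\mathbb{P}(X^*=0)=\min(1,\mu/\mu_c),$$ and let $D^*$ be mixed Poisson$(X^* )$. Then $$\min_{D\in\mathcal{D}_\mu} q_D=q_{D^*}.$$
   Context: For a non-negative real random variable $X$, a random variable $D$ is mixed Poisson$(X)$ if $\mathbb{P}(D=k)=\mathbb{E}\big(\tfrac{X^k}{k!}e^{-X}\big)$ for $k\in\{0,1,2,\dots\}$; then $\mathbb{E}(D)=\mathbb{E}(X)=:\mu_X$. For an $\{0,1,2,\dots\}$-valued random variable $D$ with $0<\mu_D=\mathbb{E}(D)<\infty$, its generating function is $f_D(s)=\mathbb{E}(s^D)$, $s\in[0,1]$, and $\bar f_D(s)=f_D'(s)/\mu_D=\sum_{k\ge1}\frac{k\mathbb{P}(D=k)}{\mu_D}s^{k-1}$ (the generating function of $\bar D-1$, where $\bar D$ is the size-biased version of $D$). For $D$ mixed Poisson$(X)$ one has $f_D(s)=\mathbb{E}(e^{-(1-s)X})$ and $\bar f_D(s)=\mathbb{E}(Xe^{-(1-s)X})/\mu_X$. $z_D$ denotes the smallest root in $[0,1]$ of $s=\bar f_D(s)$, and $q_D:=f_D(z_D)$. (In the Poissonian random graph with i.i.d. vertex weights distributed as $X$, $1-q_D$ is the limiting fraction of vertices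 in the largest component.) *)

From Stdlib Require Import Reals Lra List ClassicalEpsilon Factorial.
Open Scope R_scope.

Record prob_space := {
  Omega : Type;
  meas : (Omega -> Prop) -> Prop;
  Pr : (Omega -> Prop) -> R;
  meas_full : meas (fun _ => True);
  meas_compl : forall A, meas A -> meas (fun w => ~ A w);
  meas_cunion : forall A : nat -> Omega -> Prop,
      (forall n, meas (A n)) -> meas (fun w => exists n, A n w);
  Pr_nonneg : forall A, meas A -> 0 <= Pr A;
  Pr_full : Pr (fun _ => True) = 1;
  Pr_sigma_additive : forall A : nat -> Omega -> Prop,
      (forall n, meas (A n)) ->
      (forall m n w, m <> n -> A m w -> A n w -> False) ->
      infinite_sum (fun n => Pr (A n)) (Pr (fun w => exists n, A n w))
}.

Definition random_variable (P : prob_space) (X : Omega P -> R) : Prop :=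
  forall a : R, meas P (fun w => X w <= a).

Definition indic {T : Type} (A : T -> Prop) (w : T) : R :=
  if excluded_middle_informative (A w) then 1 else 0.

Definition simple_val {T : Type} (s : list (R * (T -> Prop))) (w : T) : R :=
  fold_right (fun p acc => fst p * indic (snd p) w + acc) 0 s.

Definition simple_int (P : prob_space) (s : list (R * (Omega P -> Prop))) : R :=
  fold_right (fun p acc => fst p * Pr P (snd p) + acc) 0 s.

(* Lebesgue integral of a nonnegative function Y: supremum of integrals of
   nonnegative simple functions below Y.  [expect_is P Y l] means E(Y) = l
   (finite). *)
Definition expect_is (P : prob_space) (Y : Omega P -> R) (l : R) : Prop :=
  is_lub (fun r => exists s : list (R * (Omega P -> Prop)),
              (forall p, In p s -> 0 <= fst p /\ meas P (snd p)) /\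
              (forall w, simple_val s w <= Y w) /\
              r = simple_int P s) l.

(* p : nat -> R is the probability mass function of a mixed Poisson(X)
   random variable D:  P(D = k) = E(X^k/k! e^{-X}). *)
Definition mixed_poisson_pmf (P : prob_space) (X : Omega P -> R) (p : nat -> R) : Prop :=
  forall k : nat, expect_is P (fun w => X w ^ k / INR (fact k) * exp (- X w)) (p k).

Definition pmf_mean (p : nat -> R) (m : R) : Prop :=
  infinite_sum (fun k => INR k * p k) m.

Definition gen_fun (p : nat -> R) (s v : R) : Prop :=
  infinite_sum (fun k => p k * s ^ k) v.

Definition sb_gen_fun (p : nat -> R) (muD s v : R) : Prop :=
  infinite_sum (fun k => INR (S k) * p (S k) / muD * s ^ k) v.

Definition is_qD (p : nat -> R) (q : R) : Prop :=
  exists muD z : R,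
    pmf_mean p muD /\
    0 <= z <= 1 /\ sb_gen_fun p muD z z /\
    (forall s, 0 <= s <= 1 -> sb_gen_fun p muD s s -> z <= s) /\
    gen_fun p z q.

Definition in_D_mu (mu : R) (p : nat -> R) : Prop :=
  exists (P : prob_space) (X : Omega P -> R),
    random_variable P X /\ (forall w, 0 <= X w) /\
    mixed_poisson_pmf P X p /\ pmf_mean p mu.

(** Let [D] be mixed Poisson([X]) with mean [mu], [z = z_D] and [th = 1 - z]; then
    [q_D = E exp (- th X)] and the fixed-point equation reads [E (th X exp (- th X)) = th mu z].
    For [y0 >= 1] with [1 + 2 y0 <= exp y0], the function [1 - exp (- y)] lies below a
    combination of [1], [y] and [y (1 - exp (- y))] touching it at [y0]; averaging at
    [y = th X] and maximising over [th] gives, with [t = 1 - exp (- y0)],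
      [(exp y0 - 1 - y0) (1 - q_D) <= t (exp y0 - 1 - 2 y0) + t^2 mu].
    If [mu < muc], take [y0 = muc - 1/2] (so [exp y0 = 1 + 2 y0]): [1 - q_D] is at most
    [mu (muc - 1/2) / muc^2 <= 1 - q_D*].  If [mu >= muc], take [y0 = mu L] with [L] the
    survival probability of a Poisson([mu]) branching process: [1 - q_D <= L = 1 - q_D*].
    The size-biased [D*] minus one is Poisson([max(mu, muc)]), which makes [q_D*] explicit. *)

From Stdlib Require Import Reals Lra Lia Psatz List Classical ClassicalEpsilon
  FunctionalExtensionality PropExtensionality Factorial.
From Coquelicot Require Import Coquelicot.
Open Scope R_scope.

Lemma Rle_of_is_derive_nonneg (f f' : R -> R) (a b : R) : a <= b ->
  (forall c, a <= c <= b -> is_derive f c (f' c)) ->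
  (forall c, a < c < b -> 0 <= f' c) -> f a <= f b.
Proof.
  intros Hab Hd Hpos. destruct (Req_dec a b) as [->|Hne]; [lra|].
  assert (Hd' : forall c, a <= c <= b -> derivable_pt_lim f c (f' c))
    by (intros c Hc; apply is_derive_Reals, Hd, Hc).
  destruct (MVT_cor2 f f' a b ltac:(lra) Hd') as [c [Hc Hcab]].
  specialize (Hpos c Hcab). nra.
Qed.

Lemma Rle_of_is_derive_nonpos (f f' : R -> R) (a b : R) : a <= b ->
  (forall c, a <= c <= b -> is_derive f c (f' c)) ->
  (forall c, a < c < b -> f' c <= 0) -> f b <= f a.
Proof.
  intros Hab Hd Hneg.
  enough (- f a <= - f b) by lra.
  apply (Rle_of_is_derive_nonneg (fun x => - f x) (fun x => - f' x)); [lra| |].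
  - intros c Hc. apply (is_derive_opp f), Hd, Hc.
  - intros c Hc. specialize (Hneg c Hc). lra.
Qed.

Lemma exp_opp_mul x : exp x * exp (- x) = 1.
Proof. rewrite <- exp_plus, Rplus_opp_r. apply exp_0. Qed.

Lemma two_sub_mul_exp_le h : 0 <= h -> (2 - h) * exp h <= 2 + h.
Proof.
  intro Hh.
  enough (H : 2 + 0 - (2 - 0) * exp 0 <= 2 + h - (2 - h) * exp h) by (rewrite exp_0 in H; lra).
  apply (Rle_of_is_derive_nonneg (fun x => 2 + x - (2 - x) * exp x)
           (fun x => 1 - (1 - x) * exp x)); [lra| |].
  - intros c _. auto_derive; [easy | ring].
  - intros c Hc. destruct (Rle_dec 1 c).
    + assert (0 < exp c) by apply exp_pos. nra.
    + assert (H1 := exp_ineq1_le (- c)). assert (H2 := exp_opp_mul c).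
      assert (0 < exp c) by apply exp_pos. nra.
Qed.

Lemma ratio_one_sub_exp_opp_antitone r s : 0 <= r <= s ->
  r * (1 - exp (- s)) <= s * (1 - exp (- r)).
Proof.
  intros [Hr Hrs].
  enough (r * (1 - exp (- r)) - r * (1 - exp (- r))
          <= s * (1 - exp (- r)) - r * (1 - exp (- s))) by lra.
  apply (Rle_of_is_derive_nonneg (fun x => x * (1 - exp (- r)) - r * (1 - exp (- x)))
           (fun x => 1 - exp (- r) - r * exp (- x))); [lra| |].
  - intros c _. auto_derive; [easy | ring].
  - intros c Hc.
    assert (exp (- c) <= exp (- r)) by (left; apply exp_increasing; lra).
    assert (H1 := exp_ineq1_le r). assert (H2 := exp_opp_mul r).
    assert (0 < exp (- r)) by apply exp_pos.
    assert (0 <= exp (- r) * (exp r - 1 - r)) by (apply Rmult_le_pos; lra).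
    nra.
Qed.

Definition kappa a s := (a - 1) * (1 - exp (- s)) - s.

Lemma kappa_nonneg_le a r s : 1 <= a -> 0 <= r <= s -> 0 <= kappa a s -> 0 <= kappa a r.
Proof.
  unfold kappa. intros Ha Hrs Hk.
  assert (Hm := ratio_one_sub_exp_opp_antitone r s Hrs).
  destruct (Req_dec s 0) as [Hs|Hs].
  - replace r with 0 by lra. rewrite Ropp_0, exp_0. lra.
  - assert (0 <= r * ((a - 1) * (1 - exp (- s)) - s)) by (apply Rmult_le_pos; lra).
    apply Rmult_le_reg_l with s; nra.
Qed.

Lemma kappa_nonpos_ge a s r : 1 <= a -> 0 < s <= r -> kappa a s <= 0 -> kappa a r <= 0.
Proof.
  unfold kappa. intros Ha Hsr Hk.
  assert (Hm := ratio_one_sub_exp_opp_antitone s r ltac:(lra)).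
  assert (r * ((a - 1) * (1 - exp (- s)) - s) <= 0) by nra.
  apply Rmult_le_reg_l with s; nra.
Qed.

Definition excess a h := a * (exp (- h) - 1 + h) - h * (1 - exp (- h)).

Lemma excess_nonneg_pos a h : 2 <= a -> 0 <= h -> 0 <= excess a h.
Proof.
  unfold excess. intros Ha Hh.
  assert (HV := two_sub_mul_exp_le h Hh). assert (H2 := exp_opp_mul h).
  assert (H3 := exp_ineq1_le (- h)).
  assert (0 < exp (- h)) by apply exp_pos. assert (0 < exp h) by apply exp_pos.
  assert (2 - h <= (2 + h) * exp (- h)).
  { replace (2 - h) with ((2 - h) * exp h * exp (- h)) by (rewrite Rmult_assoc, H2; ring).
    apply Rmult_le_compat_r; lra. }
  nra.
Qed.

Lemma excess_opp_is_derive a s : is_derive (fun s => excess a (- s)) s (exp s * kappa a s).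
Proof.
  unfold excess, kappa. auto_derive; [easy|].
  rewrite !Ropp_involutive.
  replace (exp s * ((a - 1) * (1 - exp (- s)) - s))
    with ((a - 1) * exp s - (a - 1) * (exp s * exp (- s)) - s * exp s) by ring.
  rewrite exp_opp_mul. ring.
Qed.

(** On [[- y0, 0]] the excess is minimal at an endpoint, and [1 + 2 y0 <= exp y0]
    makes it nonnegative at [- y0]. *)
Lemma excess_nonneg_neg y0 s : 1 <= y0 -> 1 + 2 * y0 <= exp y0 -> 0 <= s <= y0 ->
  0 <= excess (exp y0 - 1) (- s).
Proof.
  intros Hy0 He Hs. set (a := exp y0 - 1).
  assert (Ha : 1 <= a) by (unfold a; lra).
  destruct (Rle_dec 0 (kappa a s)) as [Hk|Hk].
  - replace 0 with (excess a (- 0)) by (unfold excess; rewrite !Ropp_0, exp_0; ring).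
    apply (Rle_of_is_derive_nonneg (fun s => excess a (- s)) (fun c => exp c * kappa a c)
             0 s (proj1 Hs)).
    + intros c _. apply excess_opp_is_derive.
    + intros c Hc. apply Rmult_le_pos; [left; apply exp_pos|].
      apply (kappa_nonneg_le a c s); lra.
  - assert (Hs0 : 0 < s).
    { destruct (Req_dec s 0) as [->|]; [|lra].
      exfalso; apply Hk. unfold kappa. rewrite Ropp_0, exp_0. lra. }
    apply Rle_trans with (excess a (- y0)).
    + unfold excess, a. rewrite Ropp_involutive.
      replace ((exp y0 - 1) * (exp y0 - 1 + - y0) - - y0 * (1 - exp y0))
        with ((exp y0 - 1) * (exp y0 - 1 - 2 * y0)) by ring.
      apply Rmult_le_pos; lra.
    + apply (Rle_of_is_derive_nonpos (fun s => excess a (- s)) (fun c => exp c * kappa a c)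
               s y0 (proj2 Hs)).
      * intros c _. apply excess_opp_is_derive.
      * intros c Hc. assert (0 < exp c) by apply exp_pos.
        assert (kappa a c <= 0) by (apply (kappa_nonpos_ge a s c); lra). nra.
Qed.

(** Both sides agree to first order at [y = y0], where [excess] has a double zero. *)
Lemma one_sub_exp_opp_le y0 y : 1 <= y0 -> 1 + 2 * y0 <= exp y0 -> 0 <= y ->
  let t := 1 - exp (- y0) in
  (exp y0 - 1 - y0) * (1 - exp (- y))
  <= t * (exp y0 - 1 - 2 * y0) + 2 * t * y - y * (1 - exp (- y)).
Proof.
  intros Hy0 He Hy t.
  assert (Hex : 0 <= excess (exp y0 - 1) (y - y0)).
  { destruct (Rle_dec 0 (y - y0)).
    - apply excess_nonneg_pos; lra.
    - replace (y - y0) with (- (y0 - y)) by ring. apply excess_nonneg_neg; lra. }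
  unfold excess in Hex.
  assert (Hx : exp (- (y - y0)) = exp (- y) * exp y0) by (rewrite <- exp_plus; f_equal; ring).
  rewrite Hx in Hex.
  assert (HE : 0 < exp y0) by apply exp_pos.
  unfold t. rewrite (exp_Ropp y0).
  set (u := exp (- y)) in *. set (E := exp y0) in *.
  set (W := (E - 1) * (u * E - 1 + (y - y0)) - (y - y0) * (1 - u * E)) in Hex.
  assert (Hid : (1 - / E) * (E - 1 - 2 * y0) + 2 * (1 - / E) * y - y * (1 - u)
                - (E - 1 - y0) * (1 - u) = W / E) by (unfold W; field; lra).
  assert (0 <= W / E) by (apply Rle_mult_inv_pos; lra).
  lra.
Qed.

(** * The critical mean *)

Lemma two_mul_le_exp_sub_half x : 9/2 <= x -> 2 * x <= exp (x - 1/2).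
Proof.
  intro Hx.
  replace (exp (x - 1/2)) with (exp ((x - 1/2) / 2) * exp ((x - 1/2) / 2))
    by (rewrite <- exp_plus; f_equal; field).
  assert (H := exp_ineq1_le ((x - 1/2) / 2)). nra.
Qed.

Lemma exists_root_ge a : exp (a - 1/2) <= 2 * a ->
  exists x, a <= x /\ 2 * x = exp (x - 1/2).
Proof.
  intro Ha. set (b := Rmax a (9/2)).
  assert (Hab : a <= b) by apply Rmax_l.
  assert (Hb : 2 * b - exp (b - 1/2) <= 0)
    by (assert (H := two_mul_le_exp_sub_half b (Rmax_r a (9/2))); lra).
  destruct (IVT_cor (fun x => 2 * x - exp (x - 1/2)) a b ltac:(reg) Hab ltac:(nra))
    as [x [Hx Hroot]].
  exists x. split; lra.
Qed.

Section CriticalMean.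
Variable muc : R.
Hypothesis muc_largest : forall x, 2 * x = exp (x - 1/2) -> x <= muc.

Lemma critical_ge_3_2 : 3/2 <= muc.
Proof.
  destruct (exists_root_ge (3/2)) as [x [Hx Hroot]].
  - replace (3/2 - 1/2) with 1 by field. pose proof exp_le_3. lra.
  - apply muc_largest in Hroot. lra.
Qed.

Lemma one_add_two_mul_le_exp y : muc - 1/2 <= y -> 1 + 2 * y <= exp y.
Proof.
  intro Hy. apply Rnot_lt_le. intro Hlt.
  destruct (exists_root_ge (y + 1/2)) as [x [Hx Hroot]].
  - replace (y + 1/2 - 1/2) with y by field. lra.
  - assert (x <= muc) by (apply muc_largest, Hroot).
    replace x with (y + 1/2) in Hroot by lra.
    replace (y + 1/2 - 1/2) with y in Hroot by field. lra.
Qed.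

End CriticalMean.

Lemma infinite_sum_ext (a b : nat -> R) l :
  (forall k, a k = b k) -> infinite_sum a l -> infinite_sum b l.
Proof. rewrite <- !is_series_Reals. apply is_series_ext. Qed.

Lemma infinite_sum_scal (a : nat -> R) c l :
  infinite_sum a l -> infinite_sum (fun k => c * a k) (c * l).
Proof. rewrite <- !is_series_Reals. apply (is_series_scal_l c a l). Qed.

Lemma infinite_sum_plus (a b : nat -> R) la lb : infinite_sum a la -> infinite_sum b lb ->
  infinite_sum (fun k => a k + b k) (la + lb).
Proof. rewrite <- !is_series_Reals. apply (is_series_plus a b). Qed.

Lemma infinite_sum_S (a : nat -> R) l :
  a 0%nat = 0 -> infinite_sum (fun k => a (S k)) l -> infinite_sum a l.
Proof.
  rewrite <- !is_series_Reals. intros Ha0 H. apply is_series_decr_1.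
  match goal with |- is_series _ ?v => replace v with l; [exact H|] end.
  rewrite Ha0. cbn. ring.
Qed.

Lemma infinite_sum_const_self c : infinite_sum (fun _ => c) c -> c = 0.
Proof.
  rewrite <- is_series_Reals. intro H.
  assert (H0 : is_series (fun _ : nat => c) 0).
  { apply (is_series_incr_1 (fun _ => c)).
    match goal with |- is_series _ ?v => replace v with c; [exact H|] end.
    cbn. ring. }
  now rewrite <- (is_series_unique _ _ H), (is_series_unique _ _ H0).
Qed.

Lemma infinite_sum_two a b :
  infinite_sum (fun n => match n with 0%nat => a | 1%nat => b | _ => 0 end) (a + b).
Proof.
  intros e He. exists 1%nat. intros n Hn.
  replace (sum_f_R0 _ n) with (a + b); [now rewrite R_dist_eq|].
  induction n as [|[|n] IH]; [lia | simpl; ring |].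
  rewrite tech5, <- IH by lia. ring.
Qed.

Lemma sum_f_R0_le_infinite_sum (a : nat -> R) l K :
  (forall k, 0 <= a k) -> infinite_sum a l -> sum_f_R0 a K <= l.
Proof.
  intros Ha H. apply (growing_ineq (sum_f_R0 a)); [|exact H].
  intro n. simpl. specialize (Ha (S n)). lra.
Qed.

Lemma infinite_sum_partial_ge (a : nat -> R) l e : infinite_sum a l -> 0 < e ->
  exists K, l - e <= sum_f_R0 a K.
Proof.
  intros H He. destruct (H e He) as [N HN]. exists N.
  specialize (HN N (Nat.le_refl _)). unfold R_dist in HN. apply Rabs_def2 in HN. lra.
Qed.

Lemma sum_f_R0_le_mono (a : nat -> R) K1 K2 : (forall k, 0 <= a k) -> (K1 <= K2)%nat ->
  sum_f_R0 a K1 <= sum_f_R0 a K2.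
Proof. intros Ha HK. induction HK as [|K2 HK IH]; simpl; [lra|]. specialize (Ha (S K2)). lra. Qed.

Lemma sum_f_R0_swap (b : nat -> nat -> R) K N :
  sum_f_R0 (fun k => sum_f_R0 (fun j => b k j) N) K
  = sum_f_R0 (fun j => sum_f_R0 (fun k => b k j) K) N.
Proof.
  induction K as [|K IH]; simpl; [reflexivity|].
  rewrite IH, <- sum_plus. reflexivity.
Qed.

Lemma partial_sums_uniform_ge (u : nat -> nat -> R) c N :
  (forall j k, 0 <= u j k) ->
  (forall j, (j <= N)%nat -> exists K, c <= sum_f_R0 (u j) K) ->
  exists K, forall j, (j <= N)%nat -> c <= sum_f_R0 (u j) K.
Proof.
  intros Hu H. induction N as [|N IH].
  - destruct (H 0%nat (Nat.le_refl _)) as [K HK]. exists K. intros j Hj.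
    now replace j with 0%nat by lia.
  - destruct IH as [K1 HK1]; [intros j Hj; apply H; lia|].
    destruct (H (S N) (Nat.le_refl _)) as [K2 HK2].
    exists (Nat.max K1 K2). intros j Hj.
    destruct (Nat.eq_dec j (S N)) as [->|Hne].
    + eapply Rle_trans; [exact HK2 | apply sum_f_R0_le_mono; [apply Hu | lia]].
    + eapply Rle_trans; [apply (HK1 j); lia | apply sum_f_R0_le_mono; [apply Hu | lia]].
Qed.

(** * Probability spaces and simple integrals *)

Lemma pred_ext {T} (A B : T -> Prop) : (forall w, A w <-> B w) -> A = B.
Proof.
  intro H. apply functional_extensionality. intro w. apply propositional_extensionality, H.
Qed.

Section ProbabilitySpace.
Variable P : prob_space.
Implicit Types A B : Omega P -> Prop.

Lemma meas_ext A B : (forall w, A w <-> B w) -> meas P A -> meas P B.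
Proof. intro H. now rewrite (pred_ext A B H). Qed.

Lemma Pr_ext A B : (forall w, A w <-> B w) -> Pr P A = Pr P B.
Proof. intro H. now rewrite (pred_ext A B H). Qed.

Lemma meas_False : meas P (fun _ => False).
Proof. apply (meas_ext (fun w => ~ True)); [tauto | apply meas_compl, meas_full]. Qed.

Lemma meas_or A B : meas P A -> meas P B -> meas P (fun w => A w \/ B w).
Proof.
  intros HA HB.
  apply (meas_ext (fun w => exists n, (match n with 0%nat => A | _ => B end) w)).
  - intro w. split.
    + intros [[|n] Hn]; auto.
    + intros [H|H]; [exists 0%nat | exists 1%nat]; auto.
  - apply meas_cunion. intros [|n]; auto.
Qed.

Lemma meas_and A B : meas P A -> meas P B -> meas P (fun w => A w /\ B w).
Proof.
  intros HA HB. apply (meas_ext (fun w => ~ (~ A w \/ ~ B w))); [intro w; tauto|].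
  apply meas_compl, meas_or; apply meas_compl; assumption.
Qed.

Lemma meas_and_not A B : meas P A -> meas P B -> meas P (fun w => A w /\ ~ B w).
Proof. intros HA HB. apply meas_and; [|apply meas_compl]; assumption. Qed.

Lemma Pr_False : Pr P (fun _ => False) = 0.
Proof.
  apply infinite_sum_const_self.
  assert (H := Pr_sigma_additive P (fun _ _ => False) (fun _ => meas_False)
                 ltac:(intros; contradiction)).
  cbv beta in H.
  now rewrite (Pr_ext (fun w => exists _ : nat, False) (fun _ => False)) in H
    by (intro w; split; [intros [_ []] | tauto]).
Qed.

Lemma Pr_empty A : (forall w, ~ A w) -> Pr P A = 0.
Proof. intro H. rewrite <- Pr_False. apply Pr_ext. intro w. split; [apply H | tauto]. Qed.

Lemma Pr_or_disjoint A B : meas P A -> meas P B -> (forall w, A w -> B w -> False) ->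
  Pr P (fun w => A w \/ B w) = Pr P A + Pr P B.
Proof.
  intros HA HB Hd.
  set (S n := match n with 0%nat => A | 1%nat => B | _ => fun _ => False end).
  replace (Pr P A + Pr P B) with (Pr P (fun w => exists n, S n w)).
  - apply Pr_ext. intro w. split.
    + intros [H|H]; [exists 0%nat | exists 1%nat]; exact H.
    + intros [[|[|n]] Hn]; simpl in Hn; tauto.
  - apply (uniqueness_sum (fun n => Pr P (S n))).
    + apply Pr_sigma_additive.
      * intros [|[|n]]; [exact HA | exact HB | exact meas_False].
      * intros [|[|m]] [|[|n]] w Hmn; simpl; try tauto; eauto.
    + apply (infinite_sum_ext
               (fun n => match n with 0%nat => Pr P A | 1%nat => Pr P B | _ => 0 end)).
      * intros [|[|n]]; [reflexivity | reflexivity | symmetry; apply Pr_False].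
      * apply infinite_sum_two.
Qed.

Lemma Pr_split A B : meas P A -> meas P B ->
  Pr P A = Pr P (fun w => A w /\ B w) + Pr P (fun w => A w /\ ~ B w).
Proof.
  intros HA HB. rewrite <- Pr_or_disjoint.
  - apply Pr_ext. intro w. tauto.
  - apply meas_and; assumption.
  - apply meas_and_not; assumption.
  - intro w. tauto.
Qed.

End ProbabilitySpace.

Lemma indic_true {T} (A : T -> Prop) w : A w -> indic A w = 1.
Proof. intro H. unfold indic. destruct (excluded_middle_informative (A w)); tauto. Qed.

Lemma indic_false {T} (A : T -> Prop) w : ~ A w -> indic A w = 0.
Proof. intro H. unfold indic. destruct (excluded_middle_informative (A w)); tauto. Qed.

Ltac indic_cases :=
  repeat match goal with
  | |- context [indic ?A ?w] =>
      let H := fresh in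
      destruct (classic (A w)) as [H|H];
      [rewrite (indic_true A w H) | rewrite (indic_false A w H)]
  end.

Section SimpleFunctions.
Variable P : prob_space.

Definition sum_indic (L : list (Omega P -> Prop)) w :=
  fold_right (fun A acc => indic A w + acc) 0 L.

Definition sum_Pr (L : list (Omega P -> Prop)) := fold_right (fun A acc => Pr P A + acc) 0 L.

Definition simple_meas (s : list (R * (Omega P -> Prop))) :=
  forall p, In p s -> 0 <= fst p /\ meas P (snd p).

Lemma sum_indic_nonneg L w : 0 <= sum_indic L w.
Proof. induction L; simpl; [lra|]. indic_cases; lra. Qed.

Lemma sum_Pr_of_sum_indic L A : (forall B, In B L -> meas P B) -> meas P A ->
  (forall w, sum_indic L w = indic A w) -> sum_Pr L = Pr P A.
Proof.
  revert A. induction L as [|B L IH]; intros A HL HA Hs; simpl.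
  - symmetry. apply Pr_empty. intros w Hw. specialize (Hs w). simpl in Hs.
    rewrite indic_true in Hs by exact Hw. lra.
  - assert (HB : meas P B) by (apply HL; left; reflexivity).
    assert (HBA : forall w, B w -> A w).
    { intros w Hw. specialize (Hs w). simpl in Hs. fold (sum_indic L w) in Hs.
      assert (H0 := sum_indic_nonneg L w). rewrite indic_true in Hs by exact Hw.
      apply NNPP. intro HnA. rewrite indic_false in Hs by exact HnA. lra. }
    rewrite (IH (fun w => A w /\ ~ B w)); auto using meas_and_not, in_cons.
    + rewrite (Pr_split P A B HA HB). f_equal. apply Pr_ext. intro w. split; auto. tauto.
    + intro w. specialize (Hs w). simpl in Hs. fold (sum_indic L w) in Hs.
      revert Hs. indic_cases; intro; first [lra | exfalso; firstorder].
Qed.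

Lemma simple_int_nonneg (s : list (R * (Omega P -> Prop))) :
  (forall b, In b s -> meas P (snd b) /\ forall w, snd b w -> 0 <= fst b) ->
  0 <= simple_int P s.
Proof.
  induction s as [|b s IH]; intro H; simpl; [lra|].
  assert (0 <= fst b * Pr P (snd b)).
  { destruct (H b (or_introl eq_refl)) as [Hm Hb].
    destruct (classic (exists w, snd b w)) as [[w Hw]|Hn].
    - apply Rmult_le_pos; [exact (Hb w Hw) | apply Pr_nonneg, Hm].
    - rewrite Pr_empty by firstorder. lra. }
  assert (0 <= simple_int P s) by (apply IH; auto using in_cons). lra.
Qed.

Definition refine_partition (c : R) (A : Omega P -> Prop) (part : list (R * (Omega P -> Prop))) :=
  flat_map (fun b => (fst b - c, fun w => snd b w /\ A w)
                    :: (fst b, fun w => snd b w /\ ~ A w) :: nil) part.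

Lemma simple_int_refine_partition c A part : meas P A -> (forall b, In b part -> meas P (snd b)) ->
  simple_int P (refine_partition c A part)
  = simple_int P part - c * sum_Pr (map (fun b w => snd b w /\ A w) part).
Proof.
  intros HA Hpart. induction part as [|b part IH]; simpl; [ring|].
  rewrite IH by auto using in_cons.
  rewrite (Pr_split P (snd b) A) by auto using in_eq. simpl. ring.
Qed.

Lemma sum_indic_refine_partition c A part w :
  sum_indic (map snd (refine_partition c A part)) w = sum_indic (map snd part) w.
Proof.
  induction part as [|b part IH]; simpl; [reflexivity|]. rewrite <- IH.
  indic_cases; first [ring | exfalso; tauto].
Qed.

Lemma simple_int_le_partition (s part : list (R * (Omega P -> Prop))) :
  (forall p, In p s -> meas P (snd p)) ->
  (forall b, In b part -> meas P (snd b)) ->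
  (forall w, sum_indic (map snd part) w = 1) ->
  (forall b, In b part -> forall w, snd b w -> simple_val s w <= fst b) ->
  simple_int P s <= simple_int P part.
Proof.
  revert part. induction s as [|[c A] s IH]; intros part Hs Hpm Hpart Hb; simpl.
  - apply simple_int_nonneg. intros b Hin. split; auto. intros w Hw. apply (Hb b Hin w Hw).
  - assert (HA : meas P A) by (apply (Hs (c, A)); left; reflexivity).
    assert (HPrA : sum_Pr (map (fun b w => snd b w /\ A w) part) = Pr P A).
    { apply sum_Pr_of_sum_indic; auto.
      - intros B HB. apply in_map_iff in HB. destruct HB as [b [<- Hb']]. apply meas_and; auto.
      - intro w. rewrite <- (Rmult_1_l (indic A w)), <- (Hpart w).
        clear. induction part as [|b part IH]; simpl; [ring|]. rewrite IH.
        indic_cases; first [ring | exfalso; tauto]. }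
    enough (H : simple_int P s <= simple_int P (refine_partition c A part))
      by (rewrite simple_int_refine_partition, HPrA in H by auto; lra).
    apply IH.
    + auto using in_cons.
    + intros b' Hb'. apply in_flat_map in Hb'. destruct Hb' as [b [Hb1 [<-|[<-|[]]]]];
        simpl; [apply meas_and | apply meas_and_not]; auto.
    + intro w. rewrite sum_indic_refine_partition. apply Hpart.
    + intros b' Hb' w Hw. apply in_flat_map in Hb'. destruct Hb' as [b [Hb1 Hb2]].
      specialize (Hb b Hb1 w). simpl in Hb.
      destruct Hb2 as [<-|[<-|[]]]; simpl in *; destruct Hw as [Hw HAw].
      * rewrite indic_true in Hb by exact HAw. specialize (Hb Hw). lra.
      * rewrite indic_false in Hb by exact HAw. specialize (Hb Hw). lra.
Qed.

Lemma expect_le Y l M : expect_is P Y l ->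
  (forall s, simple_meas s -> (forall w, simple_val s w <= Y w) -> simple_int P s <= M) -> l <= M.
Proof. intros [_ Hl] H. apply Hl. intros r [s [Hv [Hsv ->]]]. apply H; auto. Qed.

Lemma le_expect Y l s : expect_is P Y l -> simple_meas s -> (forall w, simple_val s w <= Y w) ->
  simple_int P s <= l.
Proof. intros [Hl _] Hv Hs. apply Hl. exists s. auto. Qed.

Lemma expect_nonneg Y l : (forall w, 0 <= Y w) -> expect_is P Y l -> 0 <= l.
Proof.
  intros HY H. change 0 with (simple_int P nil). apply (le_expect Y l nil H).
  - intros p [].
  - exact HY.
Qed.

End SimpleFunctions.

(** * Mixed Poisson distributions *)

Definition poisson_weight (k : nat) (x : R) := x ^ k / INR (fact k) * exp (- x).

Lemma poisson_weight_nonneg k x : 0 <= x -> 0 <= poisson_weight k x.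
Proof.
  intro Hx. unfold poisson_weight. apply Rmult_le_pos; [|left; apply exp_pos].
  apply Rle_mult_inv_pos; [apply pow_le, Hx | apply INR_fact_lt_0].
Qed.

Lemma poisson_weight_S k x : INR (S k) * poisson_weight (S k) x = x * poisson_weight k x.
Proof.
  unfold poisson_weight. rewrite fact_simpl, mult_INR. simpl pow.
  field. split; [apply INR_fact_neq_0 | apply not_0_INR; lia].
Qed.

Lemma exp_opp_mul_poisson_weight_le k y x d : 0 <= y <= x -> x <= y + d ->
  exp (- d) * poisson_weight k y <= poisson_weight k x.
Proof.
  intros Hyx Hxd. unfold poisson_weight.
  assert (y ^ k <= x ^ k) by (apply pow_incr; lra).
  assert (exp (- d) * exp (- y) <= exp (- x)).
  { rewrite <- exp_plus. destruct (Req_dec (- d + - y) (- x)) as [->|]; [lra|].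
    left. apply exp_increasing. lra. }
  assert (0 < / INR (fact k)) by (apply Rinv_0_lt_compat, INR_fact_lt_0).
  assert (0 <= y ^ k) by (apply pow_le; lra).
  assert (0 < exp (- y)) by apply exp_pos. assert (0 < exp (- d)) by apply exp_pos.
  unfold Rdiv.
  replace (exp (- d) * (y ^ k * / INR (fact k) * exp (- y)))
    with (y ^ k * / INR (fact k) * (exp (- d) * exp (- y))) by ring.
  apply Rmult_le_compat; nra.
Qed.

Lemma poisson_gf x z : infinite_sum (fun k => z ^ k * poisson_weight k x) (exp ((z - 1) * x)).
Proof.
  replace (exp ((z - 1) * x)) with (exp (- x) * exp (z * x))
    by (rewrite <- exp_plus; f_equal; ring).
  apply (infinite_sum_ext (fun k => exp (- x) * (/ INR (fact k) * (z * x) ^ k))).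
  - intro k. unfold poisson_weight. rewrite Rpow_mult_distr. field. apply INR_fact_neq_0.
  - apply infinite_sum_scal, is_series_Reals, is_pseries_R, is_exp_Reals.
Qed.

Lemma poisson_weight_sum x : infinite_sum (fun k => poisson_weight k x) 1.
Proof.
  replace 1 with (exp ((1 - 1) * x)) by (rewrite Rminus_diag, Rmult_0_l; apply exp_0).
  apply (infinite_sum_ext (fun k => 1 ^ k * poisson_weight k x)).
  - intro k. rewrite pow1. ring.
  - apply poisson_gf.
Qed.

Lemma poisson_weight_le_1 k x : 0 <= x -> poisson_weight k x <= 1.
Proof.
  intro Hx. apply Rle_trans with (sum_f_R0 (fun j => poisson_weight j x) k).
  - destruct k as [|k]; simpl; [lra|].
    assert (0 <= sum_f_R0 (fun j => poisson_weight j x) k)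
      by (apply cond_pos_sum; intro; apply poisson_weight_nonneg, Hx).
    lra.
  - apply sum_f_R0_le_infinite_sum; [intro; apply poisson_weight_nonneg, Hx |].
    apply poisson_weight_sum.
Qed.

Lemma poisson_mean x : infinite_sum (fun k => INR k * poisson_weight k x) x.
Proof.
  apply infinite_sum_S; [simpl; ring|].
  apply (infinite_sum_ext (fun k => x * poisson_weight k x)).
  - intro k. symmetry. apply poisson_weight_S.
  - assert (H := infinite_sum_scal _ x _ (poisson_weight_sum x)).
    now rewrite Rmult_1_r in H.
Qed.

Lemma poisson_gf_derive x z :
  infinite_sum (fun k => INR k * z ^ pred k * poisson_weight k x) (x * exp ((z - 1) * x)).
Proof.
  apply infinite_sum_S; [simpl; ring|].
  apply (infinite_sum_ext (fun k => x * (z ^ k * poisson_weight k x))).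
  - intro k. simpl pred.
    replace (INR (S k) * z ^ k * poisson_weight (S k) x)
      with (z ^ k * (INR (S k) * poisson_weight (S k) x)) by ring.
    rewrite poisson_weight_S. ring.
  - apply infinite_sum_scal, poisson_gf.
Qed.

Section RandomVariable.
Variable P : prob_space.
Variable X : Omega P -> R.
Hypothesis X_meas : random_variable P X.
Hypothesis X_nonneg : forall w, 0 <= X w.

Definition cdf a := Pr P (fun w => X w <= a).

Lemma meas_X_between a b : meas P (fun w => a < X w <= b).
Proof.
  apply (meas_ext P (fun w => X w <= b /\ ~ X w <= a)); [intro w; lra|].
  apply meas_and_not; apply X_meas.
Qed.

Lemma meas_X_eq a : meas P (fun w => X w = a).
Proof.
  apply (meas_ext P (fun w => X w <= a /\ ~ exists n : nat, X w <= a - / (INR n + 1))).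
  - intro w. split.
    + intros [H1 H2]. apply Rle_antisym; [exact H1|]. apply Rnot_lt_le. intro Hlt.
      apply H2. destruct (archimed_cor1 (a - X w)) as [m [Hm Hm0]]; [lra|].
      exists m. assert (0 < INR m) by (apply lt_0_INR; lia).
      assert (/ (INR m + 1) < / INR m) by (apply Rinv_lt_contravar; nra). lra.
    + intros ->. split; [lra|]. intros [n Hn].
      assert (0 < / (INR n + 1)) by (apply Rinv_0_lt_compat; pose proof (pos_INR n); lra). lra.
  - apply meas_and_not; [apply X_meas|]. apply meas_cunion. intro n. apply X_meas.
Qed.

Lemma cdf_add a b : a <= b -> cdf b = cdf a + Pr P (fun w => a < X w <= b).
Proof.
  intro Hab. unfold cdf. rewrite <- Pr_or_disjoint.
  - apply Pr_ext. intro w. lra.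
  - apply X_meas.
  - apply meas_X_between.
  - intro w. lra.
Qed.

Lemma cdf_le a b : a <= b -> cdf a <= cdf b.
Proof.
  intro Hab. rewrite (cdf_add a b Hab).
  assert (0 <= Pr P (fun w => a < X w <= b)) by apply Pr_nonneg, meas_X_between. lra.
Qed.

(** Cell [j] is [{(j - 1) d < X <= j d}]; as [X >= 0], cell [0] is [{X = 0}], and
    [INR (pred j) * d] is the left end of cell [j]. *)
Definition cell (d : R) (j : nat) w := INR j * d - d < X w <= INR j * d.

Lemma cell_disjoint d i j w : 0 < d -> i <> j -> cell d i w -> cell d j w -> False.
Proof.
  unfold cell. intros Hd Hij Hi Hj.
  destruct (Nat.lt_ge_cases i j) as [H|H].
  - assert (INR (S i) <= INR j) by (apply le_INR; lia). rewrite S_INR in *. nra.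
  - assert (INR (S j) <= INR i) by (apply le_INR; lia). rewrite S_INR in *. nra.
Qed.

Lemma sum_Pr_cell d N : 0 < d -> sum_f_R0 (fun j => Pr P (cell d j)) N = cdf (INR N * d).
Proof.
  intro Hd. induction N as [|N IH]; simpl sum_f_R0.
  - unfold cdf, cell. apply Pr_ext. intro w. simpl. specialize (X_nonneg w). lra.
  - rewrite IH, (cdf_add (INR N * d) (INR (S N) * d)) by (rewrite S_INR; nra).
    f_equal. apply Pr_ext. intro w. unfold cell. rewrite S_INR. lra.
Qed.

Lemma cdf_tail e : 0 < e -> exists N : nat, forall b, INR N <= b -> 1 - e <= cdf b.
Proof.
  intro He.
  assert (Hcover : forall w, exists j, cell 1 j w).
  { intro w. destruct (INR_unbounded (X w)) as [m Hm].
    assert (Hle : X w <= INR m) by lra. clear Hm.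
    induction m as [|m IH].
    - exists 0%nat. unfold cell. simpl in *. specialize (X_nonneg w). lra.
    - destruct (Rle_dec (X w) (INR m)) as [Hm|Hm]; [exact (IH Hm)|].
      exists (S m). unfold cell. rewrite S_INR in *. lra. }
  assert (Hsum := Pr_sigma_additive P (cell 1) (fun j => meas_X_between _ _)
                    (fun m n w Hmn => cell_disjoint 1 m n w Rlt_0_1 Hmn)).
  rewrite (Pr_ext P _ (fun _ => True)), Pr_full in Hsum by (intro w; split; auto).
  destruct (Hsum e He) as [N HN]. exists N. intros b Hb.
  specialize (HN N (Nat.le_refl _)). rewrite sum_Pr_cell, Rmult_1_r in HN by lra.
  unfold R_dist in HN. apply Rabs_def2 in HN.
  assert (cdf (INR N) <= cdf b) by (apply cdf_le, Hb). lra.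
Qed.

Fixpoint grid_simple (d : R) (f : nat -> R) (N : nat) : list (R * (Omega P -> Prop)) :=
  match N with
  | 0%nat => (f 0%nat, cell d 0) :: nil
  | S n => (f (S n), cell d (S n)) :: grid_simple d f n
  end.

Lemma simple_int_grid d f N :
  simple_int P (grid_simple d f N) = sum_f_R0 (fun j => f j * Pr P (cell d j)) N.
Proof. induction N as [|N IH]; simpl in *; [ring|]. rewrite IH. ring. Qed.

Lemma simple_meas_grid d f N : (forall j, 0 <= f j) -> simple_meas P (grid_simple d f N).
Proof.
  intros Hf p Hp. induction N as [|N IH]; simpl in Hp.
  - destruct Hp as [<-|[]]. split; [apply Hf | apply meas_X_between].
  - destruct Hp as [<-|Hp]; [split; [apply Hf | apply meas_X_between] | exact (IH Hp)].
Qed.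

Lemma simple_val_grid_outside d f N w : (forall j, (j <= N)%nat -> ~ cell d j w) ->
  simple_val (grid_simple d f N) w = 0.
Proof.
  induction N as [|N IH]; intro H; simpl.
  - rewrite indic_false by (apply H; lia). ring.
  - rewrite indic_false by (apply H; lia). simpl in IH. rewrite IH by (intros; apply H; lia). ring.
Qed.

Lemma simple_val_grid_le d f N (Y : Omega P -> R) w : 0 < d -> 0 <= Y w ->
  (forall j, (j <= N)%nat -> cell d j w -> f j <= Y w) -> simple_val (grid_simple d f N) w <= Y w.
Proof.
  intros Hd HY. induction N as [|N IH]; intro H; simpl.
  - destruct (classic (cell d 0 w)) as [Hc|Hc].
    + rewrite indic_true by exact Hc. specialize (H 0%nat (Nat.le_refl _) Hc). lra.
    + rewrite indic_false by exact Hc. lra.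
  - destruct (classic (cell d (S N) w)) as [Hc|Hc].
    + rewrite indic_true by exact Hc. simpl in *.
      rewrite simple_val_grid_outside.
      * specialize (H (S N) (Nat.le_refl _) Hc). lra.
      * intros j Hj Hj'. apply (cell_disjoint d j (S N) w Hd); [lia | exact Hj' | exact Hc].
    + rewrite indic_false by exact Hc. simpl in IH.
      assert (simple_val (grid_simple d f N) w <= Y w) by (apply IH; intros; apply H; auto).
      simpl in *. lra.
Qed.

Section MixedPoissonPmf.
Variable p : nat -> R.
Hypothesis p_mixed : mixed_poisson_pmf P X p.

Lemma mixed_poisson_pmf_nonneg k : 0 <= p k.
Proof.
  apply (expect_nonneg P (fun w => poisson_weight k (X w))); [|exact (p_mixed k)].
  intro w. apply poisson_weight_nonneg, X_nonneg.
Qed.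

Lemma grid_le_mixed_poisson_pmf k d N : 0 < d ->
  sum_f_R0 (fun j => exp (- d) * poisson_weight k (INR (pred j) * d) * Pr P (cell d j)) N <= p k.
Proof.
  intro Hd.
  rewrite <- (simple_int_grid d (fun j => exp (- d) * poisson_weight k (INR (pred j) * d))).
  assert (Hgrid : forall j, 0 <= INR (pred j) * d) by (intro j; pose proof (pos_INR (pred j)); nra).
  apply (le_expect P (fun w => poisson_weight k (X w))); [exact (p_mixed k) | |].
  - apply simple_meas_grid. intro j.
    apply Rmult_le_pos; [left; apply exp_pos | apply poisson_weight_nonneg, Hgrid].
  - intro w. apply (simple_val_grid_le _ _ _ (fun w => poisson_weight k (X w)));
      [exact Hd | apply poisson_weight_nonneg, X_nonneg |].
    intros j Hj Hcell. unfold cell in Hcell. apply exp_opp_mul_poisson_weight_le.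
    + split; [apply Hgrid|]. pose proof (X_nonneg w).
      destruct j as [|j]; [simpl in *; lra | rewrite S_INR in Hcell; simpl pred; lra].
    + destruct j as [|j]; [simpl in *; lra | rewrite S_INR in Hcell; simpl pred; lra].
Qed.

Lemma grid_le_mixed_poisson_combination (a : nat -> R) d N K : (forall k, 0 <= a k) -> 0 < d ->
  exp (- d) * sum_f_R0 (fun j => Pr P (cell d j)
                * sum_f_R0 (fun k => a k * poisson_weight k (INR (pred j) * d)) K) N
  <= sum_f_R0 (fun k => a k * p k) K.
Proof.
  intros Ha Hd.
  transitivity (sum_f_R0 (fun k => a k * sum_f_R0 (fun j =>
    exp (- d) * poisson_weight k (INR (pred j) * d) * Pr P (cell d j)) N) K).
  - right.
    set (b k j := a k * (exp (- d) * poisson_weight k (INR (pred j) * d) * Pr P (cell d j))).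
    transitivity (sum_f_R0 (fun j => sum_f_R0 (fun k => b k j) K) N).
    + rewrite scal_sum. apply sum_eq. intros j _.
      rewrite scal_sum, (Rmult_comm _ (exp (- d))), scal_sum.
      apply sum_eq. intros k _. unfold b. ring.
    + rewrite <- sum_f_R0_swap. apply sum_eq. intros k _.
      rewrite scal_sum. apply sum_eq. intros j _. unfold b. ring.
  - apply sum_Rle. intros k _. apply Rmult_le_compat_l; [apply Ha|].
    apply grid_le_mixed_poisson_pmf, Hd.
Qed.

(** Evaluating the combination at the left ends of a fine grid replaces monotone
    convergence, which is not available for [expect_is]. *)
Lemma mixed_poisson_combination_ge (a : nat -> R) c l : (forall k, 0 <= a k) ->
  (forall x, 0 <= x -> exists v, infinite_sum (fun k => a k * poisson_weight k x) v /\ c <= v) ->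
  infinite_sum (fun k => a k * p k) l -> c <= l.
Proof.
  intros Ha Hpt Hl.
  assert (Hterm : forall k, 0 <= a k * p k)
    by (intro k; apply Rmult_le_pos; [apply Ha | apply mixed_poisson_pmf_nonneg]).
  assert (Hl0 : 0 <= l).
  { apply Rle_trans with (sum_f_R0 (fun k => a k * p k) 0); [apply Hterm|].
    apply sum_f_R0_le_infinite_sum; assumption. }
  apply le_epsilon. intros e He.
  destruct (Rle_dec c e) as [Hce|Hce]; [lra|].
  (* [d] is at once the mesh, the tail mass of [X] and the truncation error; this
     choice gives [(1 - d)^2 (c - d) >= c - e]. *)
  set (d := e / (3 * (c + 1))).
  assert (Hd : 0 < d) by (unfold d; apply Rdiv_lt_0_compat; lra).
  assert (Hd3 : d * (3 * (c + 1)) = e) by (unfold d; field; lra).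
  assert (Hgrid : forall j, 0 <= INR (pred j) * d) by (intro j; pose proof (pos_INR (pred j)); nra).
  destruct (cdf_tail d Hd) as [M HM].
  destruct (INR_unbounded (INR M / d)) as [N HN].
  assert (Hcdf : 1 - d <= cdf (INR N * d)).
  { apply HM. apply Rmult_lt_compat_r with (r := d) in HN; [|exact Hd].
    unfold Rdiv in HN. rewrite Rmult_assoc, Rinv_l, Rmult_1_r in HN; lra. }
  destruct (partial_sums_uniform_ge
              (fun j k => a k * poisson_weight k (INR (pred j) * d)) (c - d) N) as [K HK].
  - intros j k. apply Rmult_le_pos; [apply Ha | apply poisson_weight_nonneg, Hgrid].
  - intros j _. destruct (Hpt _ (Hgrid j)) as [v [Hv Hcv]].
    destruct (infinite_sum_partial_ge _ _ d Hv Hd) as [K HK]. exists K. lra.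
  - assert (Hcells : (c - d) * cdf (INR N * d) <= sum_f_R0 (fun j => Pr P (cell d j)
                * sum_f_R0 (fun k => a k * poisson_weight k (INR (pred j) * d)) K) N).
    { rewrite <- sum_Pr_cell, scal_sum by exact Hd. apply sum_Rle. intros j Hj.
      apply Rmult_le_compat_l; [apply Pr_nonneg, meas_X_between | apply HK, Hj]. }
    assert (Hmix := grid_le_mixed_poisson_combination a d N K Ha Hd).
    assert (HKl := sum_f_R0_le_infinite_sum _ _ K Hterm Hl).
    assert (Hexp : 1 - d <= exp (- d)) by (pose proof (exp_ineq1_le (- d)); lra).
    assert (Hde : d <= e / 3) by (apply Rmult_le_reg_r with (3 * (c + 1)); nra).
    assert (Hd1 : d < 1/3) by (apply Rmult_lt_reg_r with (3 * (c + 1)); nra).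
    assert ((1 - d) * ((1 - d) * (c - d)) <= exp (- d) * ((c - d) * cdf (INR N * d))).
    { apply Rmult_le_compat; [lra | nra | exact Hexp |].
      rewrite (Rmult_comm (c - d)). apply Rmult_le_compat_r; lra. }
    assert (0 < exp (- d)) by apply exp_pos.
    nra.
Qed.

End MixedPoissonPmf.
End RandomVariable.

(** * The lower bound on [q_D] *)

Lemma sb_gen_fun_shift (p : nat -> R) mu z : mu <> 0 -> sb_gen_fun p mu z z ->
  infinite_sum (fun k => INR k * z ^ pred k * p k) (mu * z).
Proof.
  intros Hmu H. apply infinite_sum_S; [simpl; ring|].
  apply (infinite_sum_ext (fun k => mu * (INR (S k) * p (S k) / mu * z ^ k))).
  - intro k. simpl pred. field. exact Hmu.
  - apply infinite_sum_scal, H.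
Qed.

Lemma infinite_sum_gf_combination (u : nat -> R) z m g' g al be ga :
  infinite_sum (fun k => INR k * u k) m ->
  infinite_sum (fun k => INR k * z ^ pred k * u k) g' ->
  infinite_sum (fun k => u k * z ^ k) g ->
  infinite_sum (fun k => (al * INR k + be * (INR k * z ^ pred k) + ga * z ^ k) * u k)
    (al * m + be * g' + ga * g).
Proof.
  intros Hm Hg' Hg.
  apply (infinite_sum_ext (fun k => al * (INR k * u k) + be * (INR k * z ^ pred k * u k)
                                    + ga * (u k * z ^ k))); [intro k; ring|].
  repeat apply infinite_sum_plus; apply infinite_sum_scal; assumption.
Qed.

(** Average [one_sub_exp_opp_le] at [y = (1 - z) X], then maximise over [1 - z]. *)
Lemma qD_lower_bound mu p q y0 : 0 < mu -> in_D_mu mu p -> is_qD p q ->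
  1 <= y0 -> 1 + 2 * y0 <= exp y0 ->
  let t := 1 - exp (- y0) in
  (exp y0 - 1 - y0) * (1 - q) <= t * (exp y0 - 1 - 2 * y0) + t ^ 2 * mu.
Proof.
  intros Hmu [P [X [HX [HX0 [Hpmf Hmean]]]]] [muD [z [HmuD [Hz [Hsb [_ Hq]]]]]] Hy0 He t.
  rewrite (uniqueness_sum _ _ _ HmuD Hmean) in Hsb.
  set (th := 1 - z). set (D := exp y0 - 1 - y0). set (ga := t * (exp y0 - 1 - 2 * y0)).
  assert (Ht : 1/2 <= t).
  { unfold t. rewrite exp_Ropp. enough (/ exp y0 <= / 3) by lra.
    apply Rinv_le_contravar; lra. }
  set (a k := (2 * t - 1) * th * INR k + th * (INR k * z ^ pred k) + D * z ^ k).
  assert (Ha : forall k, 0 <= a k).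
  { intro k. unfold a, th, D.
    assert (0 <= INR k) by apply pos_INR. assert (0 <= z ^ pred k) by (apply pow_le; lra).
    assert (0 <= z ^ k) by (apply pow_le; lra).
    assert (0 <= INR k * z ^ pred k) by (apply Rmult_le_pos; assumption).
    assert (0 <= (2 * t - 1) * (1 - z)) by (apply Rmult_le_pos; lra).
    nra. }
  assert (Hbound : D - ga <= (2 * t - 1) * th * mu + th * (mu * z) + D * q).
  { apply (mixed_poisson_combination_ge P X HX HX0 p Hpmf a); [exact Ha | |].
    - intros x Hx. eexists. split.
      + apply infinite_sum_gf_combination.
        * apply poisson_mean.
        * apply poisson_gf_derive.
        * apply (infinite_sum_ext (fun k => z ^ k * poisson_weight k x));
            [intro; ring | apply poisson_gf].
      + replace ((z - 1) * x) with (- (th * x)) by (unfold th; ring).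
        assert (Hpt := one_sub_exp_opp_le y0 (th * x) Hy0 He
                         ltac:(apply Rmult_le_pos; unfold th; lra)).
        cbv zeta in Hpt. unfold ga, D, t. lra.
    - apply infinite_sum_gf_combination; [exact Hmean | | exact Hq].
      apply sb_gen_fun_shift; [lra | exact Hsb]. }
  assert (0 <= mu * (t - th) ^ 2) by (apply Rmult_le_pos; [lra | apply pow2_ge_0]).
  fold D ga. unfold th in *. nra.
Qed.

(** * The extremal distribution *)

Section TwoPointLaw.
Variable P : prob_space.
Variable X : Omega P -> R.
Hypothesis X_meas : random_variable P X.
Hypothesis X_nonneg : forall w, 0 <= X w.
Variables M pr : R.
Hypothesis M_pos : 0 < M.
Hypothesis Pr_X_eq_M : Pr P (fun w => X w = M) = pr.
Hypothesis Pr_X_eq_0 : Pr P (fun w => X w = 0) = 1 - pr.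

Let off_support w := X w <> 0 /\ X w <> M.

Lemma meas_off_support : meas P off_support.
Proof. apply meas_and; apply meas_compl, meas_X_eq; assumption. Qed.

Lemma two_point_partition w :
  sum_indic P ((fun w => X w = 0) :: (fun w => X w = M) :: off_support :: nil) w = 1.
Proof.
  unfold sum_indic, off_support. simpl.
  destruct (Req_dec (X w) 0) as [H0|H0]; [|destruct (Req_dec (X w) M) as [HM|HM]];
    indic_cases; first [ring | exfalso; tauto | exfalso; lra].
Qed.

Lemma Pr_off_support : Pr P off_support = 0.
Proof.
  assert (Hsum := sum_Pr_of_sum_indic P
    ((fun w => X w = 0) :: (fun w => X w = M) :: off_support :: nil) (fun _ => True)).
  simpl in Hsum. rewrite Pr_full, Pr_X_eq_M, Pr_X_eq_0 in Hsum.
  enough (1 - pr + (pr + (Pr P off_support + 0)) = 1) by lra.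
  apply Hsum.
  - intros B [<-|[<-|[<-|[]]]]; [apply meas_X_eq .. | apply meas_off_support]; assumption.
  - apply meas_full.
  - intro w. rewrite (indic_true (fun _ => True) w I). apply two_point_partition.
Qed.

Lemma expect_two_point (g : R -> R) B l : (forall x, 0 <= x -> 0 <= g x <= B) ->
  expect_is P (fun w => g (X w)) l -> l = (1 - pr) * g 0 + pr * g M.
Proof.
  intros Hg Hl.
  set (s := (g 0, fun w => X w = 0) :: (g M, fun w => X w = M) :: nil).
  assert (Hs : simple_int P s = (1 - pr) * g 0 + pr * g M)
    by (unfold s; simpl; rewrite Pr_X_eq_M, Pr_X_eq_0; ring).
  apply Rle_antisym.
  - apply (expect_le P _ _ _ Hl). intros s' Hs' Hs'g.
    set (part := (g 0, fun w => X w = 0) :: (g M, fun w => X w = M) :: (B, off_support) :: nil).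
    apply Rle_trans with (simple_int P part).
    + apply simple_int_le_partition.
      * intros b Hb. apply Hs', Hb.
      * intros b [<-|[<-|[<-|[]]]]; [apply meas_X_eq .. | apply meas_off_support]; assumption.
      * apply two_point_partition.
      * intros b [<-|[<-|[<-|[]]]] w Hw; simpl in Hw |- *; specialize (Hs'g w).
        -- now rewrite Hw in Hs'g.
        -- now rewrite Hw in Hs'g.
        -- apply Rle_trans with (g (X w)); [exact Hs'g | apply Hg, X_nonneg].
    + unfold part. simpl. rewrite Pr_off_support, Pr_X_eq_M, Pr_X_eq_0. lra.
  - rewrite <- Hs. apply (le_expect P _ _ _ Hl).
    + intros b [<-|[<-|[]]]; simpl; (split; [apply Hg; lra | apply meas_X_eq; assumption]).
    + intro w. unfold s. simpl.
      destruct (Req_dec (X w) 0) as [H0|H0]; [|destruct (Req_dec (X w) M) as [HM|HM]];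
        indic_cases; try (exfalso; tauto); try (exfalso; lra); rewrite ?H0, ?HM;
        pose proof (Hg (X w) (X_nonneg w)); lra.
Qed.

End TwoPointLaw.

Lemma largest_zero_exists (f : R -> R) a b : a <= b -> continuity f -> f a = 0 ->
  exists L, a <= L <= b /\ f L = 0 /\ forall t, a <= t <= b -> f t = 0 -> t <= L.
Proof.
  intros Hab Hf Hfa.
  set (Z t := a <= t <= b /\ f t = 0).
  destruct (completeness Z) as [L [HLub HLleast]].
  - exists b. intros t [Ht _]. lra.
  - exists a. split; [lra | exact Hfa].
  - assert (HaL : a <= L) by (apply HLub; split; [lra | exact Hfa]).
    assert (HLb : L <= b) by (apply HLleast; intros t [Ht _]; lra).
    exists L. split; [lra|]. split; [|intros t Ht Hft; apply HLub; split; assumption].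
    apply NNPP. intro HfL.
    destruct (Hf L (Rabs (f L)) (Rabs_pos_lt _ HfL)) as [al [Hal Hcont]].
    destruct (classic (exists t, Z t /\ L - al < t)) as [[t [[Ht Hft] Hlt]]|Hno].
    + assert (Htl : t <= L) by (apply HLub; split; assumption).
      destruct (Req_dec t L) as [->|Hne]; [contradiction|].
      assert (Hd : Rabs (f t - f L) < Rabs (f L)).
      { apply (Hcont t). split; [split; [exact I | exact (not_eq_sym Hne)]|].
        simpl. unfold R_dist. rewrite Rabs_left1; lra. }
      rewrite Hft, Rminus_0_l, Rabs_Ropp in Hd. lra.
    + enough (L <= L - al) by lra.
      apply HLleast. intros t Ht. apply Rnot_lt_le. intro Hlt. apply Hno. exists t. auto.
Qed.

(** The zeros of [surv M] in [[0, 1]] are the survival probabilities of a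
    Poisson([M]) branching process. *)
Definition surv (M t : R) := 1 - t - exp (- (M * t)).

Lemma surv_nonneg_le_largest_zero M L a :
  (forall t, 0 <= t <= 1 -> surv M t = 0 -> t <= L) ->
  0 <= a <= 1 -> 0 <= surv M a -> a <= L.
Proof.
  intros HL Ha Hsurv.
  assert (H1 : surv M 1 <= 0) by (unfold surv; pose proof (exp_pos (- (M * 1))); lra).
  destruct (IVT_cor (surv M) a 1 ltac:(unfold surv; reg) ltac:(lra) ltac:(nra)) as [r [Hr Hr0]].
  apply Rle_trans with r; [lra | apply HL; [lra | exact Hr0]].
Qed.

Section TwoPointMixture.
Variables M pr : R.
Hypothesis M_pos : 0 < M.
Hypothesis pr_pos : 0 < pr.
Variable p : nat -> R.
Hypothesis p_two_point : forall k, p k = (1 - pr) * poisson_weight k 0 + pr * poisson_weight k M.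

Lemma two_point_mean : pmf_mean p (pr * M).
Proof.
  apply (infinite_sum_ext (fun k => (1 - pr) * (INR k * poisson_weight k 0)
                                    + pr * (INR k * poisson_weight k M))).
  - intro k. rewrite p_two_point. ring.
  - replace (pr * M) with ((1 - pr) * 0 + pr * M) by ring.
    apply infinite_sum_plus; apply infinite_sum_scal, poisson_mean.
Qed.

Lemma two_point_gen_fun s : gen_fun p s (1 - pr + pr * exp ((s - 1) * M)).
Proof.
  apply (infinite_sum_ext (fun k => (1 - pr) * (s ^ k * poisson_weight k 0)
                                    + pr * (s ^ k * poisson_weight k M))).
  - intro k. rewrite p_two_point. ring.
  - replace (1 - pr) with ((1 - pr) * exp ((s - 1) * 0)) at 1
      by (rewrite Rmult_0_r, exp_0; ring).
    apply infinite_sum_plus; apply infinite_sum_scal, poisson_gf.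
Qed.

Lemma two_point_sb_gen_fun s : sb_gen_fun p (pr * M) s (exp ((s - 1) * M)).
Proof.
  apply (infinite_sum_ext (fun k => s ^ k * poisson_weight k M)); [|apply poisson_gf].
  intro k. rewrite p_two_point.
  replace (INR (S k) * ((1 - pr) * poisson_weight (S k) 0 + pr * poisson_weight (S k) M))
    with ((1 - pr) * (INR (S k) * poisson_weight (S k) 0)
          + pr * (INR (S k) * poisson_weight (S k) M))
    by ring.
  rewrite !poisson_weight_S. field. lra.
Qed.

Lemma two_point_qD L : 0 <= L <= 1 -> surv M L = 0 ->
  (forall t, 0 <= t <= 1 -> surv M t = 0 -> t <= L) -> is_qD p (1 - pr * L).
Proof.
  intros HL HL0 Hlargest.
  assert (HeL : exp ((1 - L - 1) * M) = 1 - L)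
    by (unfold surv in HL0; replace ((1 - L - 1) * M) with (- (M * L)) by ring; lra).
  exists (pr * M), (1 - L). split; [apply two_point_mean|]. split; [lra|]. split.
  - rewrite <- HeL at 2. apply two_point_sb_gen_fun.
  - split.
    + intros s Hs Hfix.
      enough (1 - s <= L) by lra. apply Hlargest; [lra|].
      unfold surv. replace (- (M * (1 - s))) with ((s - 1) * M) by ring.
      rewrite <- (uniqueness_sum _ _ _ Hfix (two_point_sb_gen_fun s)). ring.
    + replace (1 - pr * L) with (1 - pr + pr * exp ((1 - L - 1) * M)) by (rewrite HeL; ring).
      apply two_point_gen_fun.
Qed.

End TwoPointMixture.

Lemma qD_ge_subcritical mu muc L p q : 0 < mu -> 3/2 <= muc -> 2 * muc = exp (muc - 1/2) ->
  (muc - 1/2) / muc <= L -> in_D_mu mu p -> is_qD p q -> 1 - mu / muc * L <= q.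
Proof.
  intros Hmu Hmuc Hroot HL HD Hq.
  set (y0 := muc - 1/2).
  assert (Ht : 1 - exp (- y0) = y0 / muc)
    by (rewrite exp_Ropp; unfold y0; rewrite <- Hroot; field; lra).
  assert (Hbound := qD_lower_bound mu p q y0 Hmu HD Hq ltac:(unfold y0; lra)
                      ltac:(unfold y0; rewrite <- Hroot; lra)).
  cbv zeta in Hbound. rewrite Ht in Hbound. fold y0 in Hroot. rewrite <- Hroot in Hbound.
  replace (2 * muc - 1 - 2 * y0) with 0 in Hbound by (unfold y0; field).
  replace (2 * muc - 1 - y0) with y0 in Hbound by (unfold y0; field).
  assert (Hy0 : 0 < y0) by (unfold y0; lra).
  assert (1 - q <= mu / muc * (y0 / muc)).
  { apply Rmult_le_reg_l with y0; [exact Hy0|].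
    replace (y0 * (mu / muc * (y0 / muc))) with ((y0 / muc) ^ 2 * mu) by (field; lra). lra. }
  assert (mu / muc * (y0 / muc) <= mu / muc * L)
    by (unfold y0; apply Rmult_le_compat_l; [apply Rle_mult_inv_pos|]; lra).
  lra.
Qed.

Lemma qD_ge_supercritical mu L p q : 0 < mu -> 1 <= mu * L -> 1 + 2 * (mu * L) <= exp (mu * L) ->
  exp (- (mu * L)) = 1 - L -> in_D_mu mu p -> is_qD p q -> 1 - L <= q.
Proof.
  intros Hmu Hy0 He HL HD Hq.
  assert (Hbound := qD_lower_bound mu p q (mu * L) Hmu HD Hq Hy0 He).
  cbv zeta in Hbound. rewrite HL in Hbound.
  replace ((1 - (1 - L)) * (exp (mu * L) - 1 - 2 * (mu * L)) + (1 - (1 - L)) ^ 2 * mu)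
    with (L * (exp (mu * L) - 1 - mu * L)) in Hbound by ring.
  assert (0 < exp (mu * L) - 1 - mu * L) by lra.
  enough (1 - q <= L) by lra.
  apply Rmult_le_reg_l with (exp (mu * L) - 1 - mu * L); lra.
Qed.

Lemma Rmin_1_div_mul_Rmax a b : 0 < a -> 0 < b -> Rmin 1 (a / b) * Rmax a b = a.
Proof.
  intros Ha Hb. destruct (Rle_dec a b) as [Hab|Hab].
  - rewrite Rmax_right, Rmin_right by (exact Hab || exact (proj1 (Rdiv_le_1 a b Hb) Hab)).
    field. lra.
  - rewrite Rmax_left, Rmin_left by (lra || apply (proj1 (Rle_div_r 1 a b Hb)); lra). ring.
Qed.

Lemma surv_critical_nonneg muc M : 3/2 <= muc -> 2 * muc = exp (muc - 1/2) -> muc <= M ->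
  0 <= (muc - 1/2) / M <= 1 /\ 0 <= surv M ((muc - 1/2) / M).
Proof.
  intros Hmuc Hroot HM.
  assert (Hle : (muc - 1/2) / M <= (muc - 1/2) / muc)
    by (apply Rmult_le_compat_l; [lra | apply Rinv_le_contravar; lra]).
  assert ((muc - 1/2) / muc = 1 - / (2 * muc)) by (field; lra).
  assert (0 < / (2 * muc)) by (apply Rinv_0_lt_compat; lra).
  split; [split; [apply Rle_mult_inv_pos|]; lra|].
  unfold surv. replace (- (M * ((muc - 1/2) / M))) with (- (muc - 1/2)) by (field; lra).
  rewrite exp_Ropp, <- Hroot. lra.
Qed.

(** The critical root forces [L >= (muc - 1/2) / max(mu, muc)], which is exactly what
    the two choices of [y0] in [qD_lower_bound] need. *)
Lemma qD_ge_extremal mu muc L p q : 0 < mu -> 2 * muc = exp (muc - 1/2) ->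
  (forall x, 2 * x = exp (x - 1/2) -> x <= muc) ->
  surv (Rmax mu muc) L = 0 ->
  (forall t, 0 <= t <= 1 -> surv (Rmax mu muc) t = 0 -> t <= L) ->
  in_D_mu mu p -> is_qD p q -> 1 - Rmin 1 (mu / muc) * L <= q.
Proof.
  intros Hmu Hroot Hlargest HL0 HLmax HD Hq.
  assert (Hmuc := critical_ge_3_2 muc Hlargest).
  destruct (surv_critical_nonneg muc (Rmax mu muc) Hmuc Hroot (Rmax_r mu muc)) as [Ha Hsurv].
  assert (HLc := surv_nonneg_le_largest_zero _ L _ HLmax Ha Hsurv).
  destruct (Rlt_le_dec mu muc) as [Hlt|Hge].
  - rewrite Rmax_right in HLc by lra.
    rewrite Rmin_right by exact (proj1 (Rdiv_le_1 mu muc ltac:(lra)) ltac:(lra)).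
    apply (qD_ge_subcritical mu muc L p q); assumption.
  - rewrite Rmax_left in HLc, HL0 by lra.
    rewrite Rmin_left, Rmult_1_l by (apply (proj1 (Rle_div_r 1 mu muc ltac:(lra))); lra).
    assert (Hy0 : muc - 1/2 <= mu * L).
    { rewrite Rmult_comm. apply Rle_div_l; [lra | exact HLc]. }
    apply (qD_ge_supercritical mu L p q); try assumption.
    + lra.
    + apply (one_add_two_mul_le_exp muc); assumption.
    + unfold surv in HL0. lra.
Qed.

Theorem theorem3p1 :
  forall (mu muc : R), 0 < mu ->
  2 * muc = exp (muc - 1/2) ->
  (forall x : R, 2 * x = exp (x - 1/2) -> x <= muc) ->
  forall (P0 : prob_space) (Xstar : Omega P0 -> R) (pstar : nat -> R),
    random_variable P0 Xstar -> (forall w, 0 <= Xstar w) ->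
    Pr P0 (fun w => Xstar w = Rmax mu muc) = Rmin 1 (mu / muc) ->
    1 - Pr P0 (fun w => Xstar w = 0) = Rmin 1 (mu / muc) ->
    mixed_poisson_pmf P0 Xstar pstar ->
    in_D_mu mu pstar /\
    exists qstar : R, is_qD pstar qstar /\
      forall (p : nat -> R) (q : R), in_D_mu mu p -> is_qD p q -> qstar <= q.
Proof.
  intros mu muc Hmu Hroot Hlargest P0 X pstar HX HX0 HPM HP0 Hpmf.
  assert (Hmuc := critical_ge_3_2 muc Hlargest).
  assert (HprM := Rmin_1_div_mul_Rmax mu muc Hmu ltac:(lra)).
  set (M := Rmax mu muc) in *. set (pr := Rmin 1 (mu / muc)) in *.
  assert (HM : 0 < M) by (unfold M; pose proof (Rmax_r mu muc); lra).
  assert (Hpr : 0 < pr) by (apply Rmin_glb_lt; [lra | apply Rdiv_lt_0_compat; lra]).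
  assert (Hpstar : forall k, pstar k = (1 - pr) * poisson_weight k 0 + pr * poisson_weight k M).
  { intro k. apply (expect_two_point P0 X HX HX0 M pr HM HPM ltac:(lra) _ 1); [|exact (Hpmf k)].
    intros x Hx. split; [apply poisson_weight_nonneg | apply poisson_weight_le_1]; exact Hx. }
  destruct (largest_zero_exists (surv M) 0 1 ltac:(lra) ltac:(unfold surv; reg))
    as [L [HL [HL0 HLmax]]]; [unfold surv; rewrite Rmult_0_r, Ropp_0, exp_0; ring|].
  split.
  - exists P0, X. split; [exact HX | split; [exact HX0 | split; [exact Hpmf|]]].
    rewrite <- HprM. apply (two_point_mean M pr); assumption.
  - exists (1 - pr * L). split; [apply (two_point_qD M pr); auto; nra|].
    intros p q. apply (qD_ge_extremal mu muc L p q); assumption.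
Qed.
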